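(* Under the distributed-delay standing assumptions, let $\{x_i\}_{i=1}^N$ be a solution of the distributed-delay Hegselmann–Krause system. Then for every $v\in\mathbb{R}^d$, every $T\ge 0$, every $i=1,\dots,N$ and every $t\ge T-\bar\tau$, $$\min_{j=1,\dots,N}\min_{s\in[T-\bar\tau,T]}\langle x_j(s),v\rangle\le\langle x_i(t),v\rangle\le\max_{j=1,\dots,N}\max_{s\in[T-\bar\tau,T]}\langle x_j(s),v\rangle.$$
   Context: Distributed-delay standing assumptions: $N\ge2$, $d\ge1$, $\bar\tau>0$; $\tau_1,\tau_2:[0,\infty)\to[0,\infty)$ continuous with $0\le\tau_1(t)<\tau_2(t)\le\bar\tau$ for all $t\ge0$; $\alpha:[0,\bar\tau]\to(0,\infty)$ continuous; $h(t):=\int_{\tau_1(t)}^{\tau_2(t)}\alpha(s)\,ds>0$; $\psi:\mathbb{R}^d\times\mathbb{R}^d\to\mathbb{R}$ continuous, bounded and strictly positive, $K:=\|\psi\|_\infty$; initial data $x_i^0:[-\bar\tau,0]\to\mathbb{R}^d$ continuous. The distributed-delay system is $$\frac{d}{dt}x_i(t)=\frac{1}{h(t)}\frac{1}{N-1}\sum_{j\ne i}\int_{t-\tau_2(t)}^{t-\tau_1(t)}\alpha(t-s)\,\psi(x_i(t),x_j(s))\,(x_j(s)-x_i(t))\,ds,\quad t>0,$$ with $x_i=x_i^0$ on $[-\bar\tau,0]$; a solution means continuous $x_i:[-\bar\tau,\infty)\to\mathbb{R}^d$, differentiable on $(0,\infty)$, satisfying the system there. $\langle\cdot,\cdot\rangle$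 is the Euclidean inner product. *)

From HB Require Import structures.
From mathcomp Require Import all_boot all_order all_algebra.
From mathcomp Require Import all_classical all_reals all_analysis.
Set Implicit Arguments. Unset Strict Implicit. Unset Printing Implicit Defensive.
Import Order.TTheory GRing.Theory Num.Theory.
Import numFieldNormedType.Exports.
Local Open Scope classical_set_scope.
Local Open Scope ring_scope.

Definition dotv (R : realType) (d : nat) (a b : 'rV[R]_d) : R :=
  \sum_(k < d) a 0 k * b 0 k.

Definition hdel (R : realType) (tau1 tau2 alpha : R -> R) (t : R) : R :=
  Rintegral lebesgue_measure `[tau1 t, tau2 t] alpha.

Definition vintegral (R : realType) (d : nat) (a b : R) (f : R -> 'rV[R]_d)
  : 'rV[R]_d :=
  \row_(k < d) Rintegral lebesgue_measure `[a, b] (fun s => f s 0 k).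

Definition hk_rhs (R : realType) (N d : nat) (tau1 tau2 alpha : R -> R)
  (psi : 'rV[R]_d -> 'rV[R]_d -> R) (x : 'I_N -> R -> 'rV[R]_d)
  (i : 'I_N) (t : R) : 'rV[R]_d :=
  ((hdel tau1 tau2 alpha t)^-1 * (N%:R - 1)^-1) *:
    \sum_(j < N | j != i)
      vintegral (t - tau2 t) (t - tau1 t)
        (fun s => (alpha (t - s) * psi (x i t) (x j s)) *: (x j s - x i t)).

From HB Require Import structures.
From mathcomp Require Import all_boot all_order all_algebra.
From mathcomp Require Import all_classical all_reals all_analysis.
From mathcomp Require Import lra.
Import Order.TTheory GRing.Theory Num.Theory.
Import numFieldNormedType.Exports.
Local Open Scope classical_set_scope.
Local Open Scope ring_scope.

(* Fix v and write y_j(s) = <x_j(s), v>; let M be the supremum of the y_j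
   over the window [T - taubar, T].  For eps > 0, maximise y_j(s) - eps s
   jointly over j and s in [T - taubar, t].  At a maximiser (i0, s0) with
   s0 > T every delayed value y_j(s), s <= s0, is at most y_i0(s0), so the
   system gives y_i0'(s0) <= 0, whereas maximality from the left gives
   y_i0'(s0) >= eps.  Hence s0 <= T, so y_i(t) <= M + eps (t - T + taubar)
   for every eps > 0.  The lower bound is the upper bound for -v. *)

Section dotv.
Context (R : realType) (d : nat).
Implicit Types (u w v : 'rV[R]_d).

Lemma dotvZ c u v : dotv (c *: u) v = c * dotv u v.
Proof. by rewrite /dotv mulr_sumr; apply: eq_bigr => k _; rewrite mxE mulrA. Qed.

Lemma dotvB u w v : dotv (u - w) v = dotv u v - dotv w v.
Proof. by rewrite /dotv -sumrB; apply: eq_bigr => k _; rewrite !mxE mulrBl. Qed.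

Lemma dotvN u v : dotv u (- v) = - dotv u v.
Proof. by rewrite /dotv -sumrN; apply: eq_bigr => k _; rewrite !mxE mulrN. Qed.

Lemma dotv_sum (I : Type) (r : seq I) (P : pred I) (F : I -> 'rV[R]_d) v :
  dotv (\sum_(j <- r | P j) F j) v = \sum_(j <- r | P j) dotv (F j) v.
Proof.
rewrite /dotv; under eq_bigr do rewrite summxE mulr_suml.
exact: exchange_big.
Qed.

Lemma dotv_cvg {T} (F : set_system T) {FF : Filter F} (f : T -> 'rV[R]_d) l v :
  f @ F --> l -> (fun t => dotv (f t) v) @ F --> dotv l v.
Proof.
move=> fl; apply: cvg_big => [|k _]; first exact: add_continuous.
apply: cvgM; last exact: cvg_cst.
apply: (cvg_comp _ (fun M : 'rV[R]_d => M 0 k) fl).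
exact: coord_continuous.
Qed.

Lemma dotv_continuous v : continuous (fun u => dotv u v).
Proof. by move=> u; apply: (@dotv_cvg _ (nbhs u) _ id). Qed.

End dotv.

Lemma continuous_subspace_comp {T U V : topologicalType} {A : set T} {B : set U}
    {f : T -> U} {g : U -> V} :
  (forall s, A s -> B (f s)) ->
  {within A, continuous f} -> {within B, continuous g} ->
  {within A, continuous (g \o f)}.
Proof.
move=> AB /subspace_continuousP cf /subspace_continuousP cg.
apply/subspace_continuousP => s As; apply: cvg_comp (cg _ (AB _ As)).
move=> P /= /(cf _ As); apply: filterS2 (withinT A (nbhs_filter s)).
by move=> y Ay; apply; exact: AB.
Qed.

Lemma Rintegral_sum d (T : measurableType d) (R : realType) (mu : measure T R)
    (D : set T) (I : Type) (r : seq I) (F : I -> T -> R) :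
  measurable D -> (forall i, mu.-integrable D (EFin \o F i)) ->
  Rintegral mu D (fun x => \sum_(i <- r) F i x) =
  \sum_(i <- r) Rintegral mu D (F i).
Proof.
move=> mD intF; elim: r => [|i r IH].
  by under eq_Rintegral do rewrite big_nil; rewrite Rintegral_cst // mul0r big_nil.
under eq_Rintegral do rewrite big_cons.
rewrite big_cons -IH RintegralD //.
have -> : EFin \o (fun x => \sum_(j <- r) F j x) = fun x => (\sum_(j <- r) (F j x)%:E)%E.
  by apply/funext => x; rewrite /= sumEFin.
by apply: (integrable_sum mD) => j _; exact: intF.
Qed.

Lemma segment_continuous_integrable (R : realType) (a b : R) (f : R -> R) :
  {within `[a, b], continuous f} ->
  lebesgue_measure.-integrable `[a, b] (EFin \o f).
Proof.
by move=> cf; apply: continuous_compact_integrable => //; exact: segment_compact.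
Qed.

Lemma dotv_vintegral (R : realType) d (a b : R) (f : R -> 'rV[R]_d) v :
  {within `[a, b], continuous f} ->
  dotv (vintegral a b f) v =
  Rintegral lebesgue_measure `[a, b] (fun s => dotv (f s) v).
Proof.
move=> cf; have cfk k : {within `[a, b], continuous (fun s => f s 0 k)}.
  move/subspace_continuousP: cf => cf; apply/subspace_continuousP => s hs.
  apply: (cvg_comp _ (fun M : 'rV[R]_d => M 0 k) (cf s hs)).
  exact: coord_continuous.
rewrite Rintegral_sum //; last first.
  move=> k; apply: segment_continuous_integrable.
  move/subspace_continuousP: (cfk k) => ck; apply/subspace_continuousP => s hs.
  by apply: cvgM; [exact: ck | exact: cvg_cst].
apply: eq_bigr => k _; rewrite mxE -RintegralZr //.
exact: segment_continuous_integrable.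
Qed.

Lemma dotv_vintegral_le0 (R : realType) d (a b : R) (f : R -> 'rV[R]_d) v :
  {within `[a, b], continuous f} ->
  (forall s, a <= s <= b -> dotv (f s) v <= 0) ->
  dotv (vintegral a b f) v <= 0.
Proof.
move=> cf fv; rewrite dotv_vintegral // -oppr_ge0 -mulN1r -RintegralZl //.
- apply: Rintegral_ge0 => s; rewrite /= in_itv /= => /fv.
  by rewrite mulN1r oppr_ge0.
- apply: segment_continuous_integrable.
  apply: (@within_continuous_comp _ _ _ _ f (fun u => dotv u v)) cf => u _.
  exact: dotv_continuous.
Qed.

Lemma hk_integrand_continuous (R : realType) d (taubar : R) (alpha : R -> R)
    (psi : 'rV[R]_d -> 'rV[R]_d -> R) (p : 'rV[R]_d) (y : R -> 'rV[R]_d) (t a b : R) :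
  {within `[0, taubar], continuous alpha} ->
  continuous (fun q : 'rV[R]_d * 'rV[R]_d => psi q.1 q.2) ->
  {within `[a, b], continuous y} ->
  (forall s, a <= s <= b -> 0 <= t - s <= taubar) ->
  {within `[a, b], continuous (fun s => (alpha (t - s) * psi p (y s)) *: (y s - p))}.
Proof.
move=> ca cpsi cy hts.
have /subspace_continuousP ca' : {within `[a, b], continuous (alpha \o (fun s => t - s))}.
  apply: continuous_subspace_comp ca => [s|].
    by rewrite /= !in_itv /= => /hts.
  by apply: continuous_subspaceT => s; apply: cvgB; [exact: cvg_cst | exact: cvg_id].
move/subspace_continuousP: cy => cy.
apply/subspace_continuousP => s hs.
apply: cvgZ; last by apply: cvgB; [exact: cy | exact: cvg_cst].
apply: cvgM; first exact: ca'.
apply: (cvg_comp (fun r => (p, y r)) (fun q => psi q.1 q.2)); last exact: (cpsi (p, y s)).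
exact: (cvg_pair (cvg_cst p) (cy s hs)).
Qed.

Lemma dotv_derive_ge (R : realType) d (f : R -> 'rV[R]_d) t v e :
  derivable f t 1 ->
  (\forall h \near 0^'-, e <= h^-1 * (dotv (f (h + t)) v - dotv (f t) v)) ->
  e <= dotv ('D_1 f t) v.
Proof.
move=> df hq.
have cq : (fun h : R => dotv (h^-1 *: ((f \o shift t) (h *: 1) - f t)) v) @ 0^'-
    --> dotv ('D_1 f t) v.
  by apply: cvg_dnbhs_at_left; exact: dotv_cvg.
apply: (cvgr_to_ge cq); move: hq; apply: filterS => h.
by rewrite dotvZ dotvB /= /shift -[h%:A]/(h * 1) mulr1.
Qed.

Lemma EVT_max_family {R : realType} {I : finType} {f : I -> R -> R} {a b : R} (i : I) :
  a <= b -> (forall j, {within `[a, b], continuous (f j)}) ->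
  exists j0, exists2 c, c \in `[a, b] &
    forall j s, s \in `[a, b] -> f j s <= f j0 c.
Proof.
move=> ab cf.
have /choice[c hc] : forall j, exists c, c \in `[a, b] /\
    forall s, s \in `[a, b] -> f j s <= f j c.
  by move=> j; have [c ? ?] := EVT_max ab (cf j); exists c.
have [j0 _ j0max] := @arg_maxP _ R I i xpredT (fun j => f j (c j)) isT.
exists j0, (c j0) => [|j s hs]; first exact: (hc j0).1.
exact: le_trans ((hc j).2 s hs) (j0max j isT).
Qed.

Definition window_dotv {R : realType} {N d : nat} (x : 'I_N -> R -> 'rV[R]_d)
    (v : 'rV[R]_d) (a b : R) : set R :=
  [set r | exists (j : 'I_N) (s : R), s \in `[a, b] /\ r = dotv (x j s) v].

Lemma window_dotvN (R : realType) (N d : nat) (x : 'I_N -> R -> 'rV[R]_d) v a b :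
  [set - r | r in window_dotv x v a b] = window_dotv x (- v) a b.
Proof.
apply/seteqP; split => r /=.
  by move=> [_ [j [s [hs ->]]] <-]; exists j, s; rewrite dotvN.
move=> [j [s [hs ->]]]; exists (dotv (x j s) v); first by exists j, s.
by rewrite dotvN.
Qed.

Section upper_bound.
Context {R : realType} {N d : nat} {taubar : R} {tau1 tau2 alpha : R -> R}
  {psi : 'rV[R]_d -> 'rV[R]_d -> R} {x : 'I_N -> R -> 'rV[R]_d}.
Hypothesis tau_bounds :
  forall t, 0 <= t -> 0 <= tau1 t /\ tau1 t < tau2 t /\ tau2 t <= taubar.
Hypothesis alpha_cont : {within `[0, taubar], continuous alpha}.
Hypothesis alpha_ge0 : forall s, 0 <= s <= taubar -> 0 <= alpha s.
Hypothesis psi_cont : continuous (fun p : 'rV[R]_d * 'rV[R]_d => psi p.1 p.2).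
Hypothesis psi_ge0 : forall p q, 0 <= psi p q.
Hypothesis x_cont : forall i, {within `[- taubar, +oo[, continuous (x i)}.
Hypothesis x_ode : forall i t, 0 < t ->
  derivable (x i) t 1 /\ 'D_1 (x i) t = hk_rhs tau1 tau2 alpha psi x i t.
Variable v : 'rV[R]_d.

Let y j s := dotv (x j s) v.

Lemma y_continuous j a b : - taubar <= a -> {within `[a, b], continuous (y j)}.
Proof.
move=> ha; apply: (@within_continuous_comp _ _ _ _ (x j) (fun u => dotv u v)).
  by move=> u _; exact: dotv_continuous.
apply: (continuous_subspaceW _ (x_cont j)) => s /=.
by rewrite !in_itv /= => /andP[a_le_s _]; rewrite (le_trans ha a_le_s).
Qed.

Lemma dotv_hk_rhs_le0 i t : 0 <= t ->
  (forall j s, t - tau2 t <= s <= t - tau1 t -> y j s <= y i t) ->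
  dotv (hk_rhs tau1 tau2 alpha psi x i t) v <= 0.
Proof.
move=> t0 delayed_le; have [tau1_ge0 [_ tau2_le]] := tau_bounds t t0.
have N_gt0 : (0 < N)%N := leq_ltn_trans (leq0n i) (ltn_ord i).
rewrite /hk_rhs dotvZ; apply: mulr_ge0_le0.
  apply: mulr_ge0; rewrite invr_ge0; last by rewrite subr_ge0 ler1n.
  apply: Rintegral_ge0 => s; rewrite /= in_itv /= => /andP[h1 h2].
  by apply: alpha_ge0; rewrite (le_trans tau1_ge0 h1) (le_trans h2 tau2_le).
rewrite dotv_sum; apply: sumr_le0 => j _; apply: dotv_vintegral_le0.
  apply: hk_integrand_continuous => //; last by move=> s hs; apply/andP; lra.
  apply: (continuous_subspaceW _ (x_cont j)) => s /=.
  by rewrite !in_itv /= andbT => /andP[hs _]; lra.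
move=> s hs; rewrite dotvZ dotvB; apply: mulr_ge0_le0.
  by apply: mulr_ge0 => //; apply: alpha_ge0; apply/andP; lra.
by rewrite subr_le0; exact: delayed_le.
Qed.

Lemma tilted_argmax_le {T t eps : R} {i0 : 'I_N} {s0 : R} : 0 <= T -> 0 < eps ->
  s0 \in `[T - taubar, t] ->
  (forall j s, s \in `[T - taubar, t] -> y j s - eps * s <= y i0 s0 - eps * s0) ->
  s0 <= T.
Proof.
move=> T0 eps0; rewrite in_itv /= => /andP[as0 s0t] s0max.
rewrite leNgt; apply/negP => Ts0.
have s0_gt0 : 0 < s0 by lra.
have [tau1_ge0 [tau12 tau2_le]] := tau_bounds s0 (ltW s0_gt0).
have [dx Dx] := x_ode i0 s0 s0_gt0.
have : dotv ('D_1 (x i0) s0) v <= 0.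
  rewrite Dx; apply: dotv_hk_rhs_le0 => [|j s /andP[h1 h2]]; first exact: ltW.
  have /(s0max j) : s \in `[T - taubar, t] by rewrite in_itv /=; apply/andP; lra.
  have : eps * s <= eps * s0 by rewrite ler_pM2l //; lra.
  lra.
have : eps <= dotv ('D_1 (x i0) s0) v.
  apply: dotv_derive_ge => //; rewrite near_withinE.
  have : T - taubar - s0 < 0 by lra.
  move=> /lt_nbhsr; apply: filterS => h hgt hlt.
  have /(s0max i0) : h + s0 \in `[T - taubar, t] by rewrite in_itv /=; apply/andP; lra.
  have : h^-1 < 0 by rewrite invr_lt0.
  have : h^-1 * h = 1 by rewrite mulVf // lt_eqF.
  rewrite /y; nra.
lra.
Qed.

Lemma dotv_le_window_sup T i t : 0 <= T -> T - taubar <= t ->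
  y i t <= sup (window_dotv x v (T - taubar) T).
Proof.
move=> T0 at_; set a := T - taubar; set S := window_dotv x v a T.
have [tau1_ge0 [tau12 tau2_le]] := tau_bounds T T0.
have aT : a <= T by rewrite /a; lra.
have cy j b : {within `[a, b], continuous (y j)} by apply: y_continuous; rewrite /a; lra.
have ub j s : s \in `[a, T] -> y j s <= sup S.
  move=> hs; apply: sup_upper_bound; last by exists j, s.
  split; first by exists (y i T), i, T; rewrite in_itv /= aT lexx.
  have [j0 [c _ cmax]] := EVT_max_family i aT (fun j => cy j T).
  by exists (y j0 c) => _ [k [r [hr ->]]]; exact: cmax.
have [tT|Tt] := leP t T; first by apply: ub; rewrite in_itv /= at_ tT.
apply/ler_addgt0Pr => e e0; set eps := e / (t - a).
have ta0 : 0 < t - a by lra.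
have eps0 : 0 < eps by exact: divr_gt0.
have cf j : {within `[a, t], continuous (fun s => y j s - eps * s)}.
  move/subspace_continuousP: (cy j t) => cyj; apply/subspace_continuousP => s hs.
  apply: cvgB; first exact: cyj.
  by apply: cvgM; [exact: cvg_cst | exact: cvg_within_filter; exact: cvg_id].
have [i0 [s0 hs0 s0max]] := EVT_max_family i at_ cf.
have s0T : s0 <= T by exact: tilted_argmax_le T0 eps0 hs0 s0max.
have /(ub i0) : s0 \in `[a, T] by rewrite in_itv /= (itvP hs0) s0T.
have /(s0max i) : t \in `[a, t] by rewrite in_itv /= at_ lexx.
have : eps * (t - a) = e by rewrite /eps divfK // gt_eqF.
have : eps * a <= eps * s0 by rewrite ler_pM2l // (itvP hs0).
lra.
Qed.

End upper_bound.

Theorem lemma5p1 (R : realType) (N d : nat) (taubar : R)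
  (tau1 tau2 alpha : R -> R) (psi : 'rV[R]_d -> 'rV[R]_d -> R)
  (x : 'I_N -> R -> 'rV[R]_d) :
  (2 <= N)%N -> (1 <= d)%N -> 0 < taubar ->
  {within `[0, +oo[, continuous tau1} ->
  {within `[0, +oo[, continuous tau2} ->
  (forall t, 0 <= t -> 0 <= tau1 t /\ tau1 t < tau2 t /\ tau2 t <= taubar) ->
  {within `[0, taubar], continuous alpha} ->
  (forall s, 0 <= s <= taubar -> 0 < alpha s) ->
  continuous (fun p : 'rV[R]_d * 'rV[R]_d => psi p.1 p.2) ->
  (exists K : R, forall a b, psi a b <= K) ->
  (forall a b, 0 < psi a b) ->
  (forall i, {within `[- taubar, +oo[, continuous (x i)}) ->
  (forall i t, 0 < t ->
     derivable (x i) t 1 /\ 'D_1 (x i) t = hk_rhs tau1 tau2 alpha psi x i t) ->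
  forall (v : 'rV[R]_d) (T : R) (i : 'I_N) (t : R),
    0 <= T -> T - taubar <= t ->
    inf [set r | exists (j : 'I_N) (s : R), s \in `[T - taubar, T] /\ r = dotv (x j s) v]
      <= dotv (x i t) v /\
    dotv (x i t) v
      <= sup [set r | exists (j : 'I_N) (s : R), s \in `[T - taubar, T] /\ r = dotv (x j s) v].
Proof.
move=> _ _ _ _ _ tau_bounds alpha_cont alpha_gt0 psi_cont _ psi_gt0 x_cont x_ode
  v T i t T0 Tt.
have alpha_ge0 s (hs : 0 <= s <= taubar) : 0 <= alpha s := ltW (alpha_gt0 s hs).
have psi_ge0 p q : 0 <= psi p q := ltW (psi_gt0 p q).
have ub := dotv_le_window_sup tau_bounds alpha_cont alpha_ge0 psi_cont psi_ge0
  x_cont x_ode.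
split; last exact: ub.
rewrite /inf -/(window_dotv x v (T - taubar) T) window_dotvN lerNl -dotvN.
exact: ub.
Qed.
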